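(* Let $r\in\mathbb N$ and $0\le k\le r$. There are constants $C(k,r)$ and $C(r)$ such that for all $f\in\mathbf E^{r}$ and all $s>0$: (I) $\|f\|_{\mathbf E^{k}}\le C(k,r)\,\|f\|_{\mathbf E}^{1-k/r}\,\|f\|_{\mathbf E^{r}}^{k/r}$; (II) $K(s^{r},f,\mathbf E,\mathbf E^{r})\le C(r)\,s^{r}\,\|f\|_{\mathbf E^{r}}$.
   Context: Let $G=\mathbb R_+\times\mathbb R$ be the ''$ax+b$'' group with multiplication $(a_1,b_1)(a_2,b_2)=(a_1a_2,\,a_1b_2+b_1)$. Let $T$ be a strongly continuous representation of $G$ in a Banach space $\mathbf E$ with $\|T(g)f\|_{\mathbf E}\le\|f\|_{\mathbf E}$. Put $T_1(t)=T(e^{t},0)$, $T_2(t)=T(1,t)$, with (closed) generators $\mathbb A_1,\mathbb A_2$. For $r\in\mathbb N$, $\mathbf E^{r}$ is the space of $f\in\mathbf E$ for which all products $\mathbb A_{j_1}\cdots\mathbb A_{j_k}f$, $1\le k\le r$, $j_i\in\{1,2\}$, are defined, with norm $\|f\|_{\mathbf E^r}=\|f\|_{\mathbf E}+\sum_{k=1}^r\sum_{(j_1,\dots,j_k)\in\{1,2\}^k}\|\mathbb A_{j_1}\cdots\mathbb A_{j_k}f\|_{\mathbf E}$; $\mathbf E^0=\mathbf E$. $K(t,f,\mathbf E,\mathbf E^r)=\inf\{\|f_0\|_{\mathbf E}+t\|f_1\|_{\mathbf E^r}: f=f_0+f_1,\ f_0\in\mathbf E,\ f_1\in\mathbf E^r\}$.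 *)

From HB Require Import structures.
From mathcomp Require Import all_boot all_order all_algebra.
From mathcomp Require Import all_classical all_reals all_analysis.
Set Implicit Arguments. Unset Strict Implicit. Unset Printing Implicit Defensive.
Import Order.TTheory GRing.Theory Num.Theory.
Import numFieldNormedType.Exports.
Local Open Scope classical_set_scope.
Local Open Scope ring_scope.

(* The "ax+b" group G = R_+ x R, (a1,b1)(a2,b2) = (a1 a2, a1 b2 + b1).
   A representation is given as T : R -> R -> E -> E, where T a b is T(a,b);
   only values with a > 0 are meaningful. *)
Section Rep.
Variables (R : realType) (E : completeNormedModType R).
Implicit Types (T : R -> R -> E -> E).

Definition is_contr_rep T : Prop :=
  [/\ (forall (a b : R), 0 < a -> forall (c : R) (f g : E),
          T a b (c *: f + g) = c *: T a b f + T a b g),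
      T 1 0 =1 id,
      (forall a1 b1 a2 b2 : R, 0 < a1 -> 0 < a2 ->
          T (a1 * a2) (a1 * b2 + b1) =1 T a1 b1 \o T a2 b2),
      (forall (a b : R) (f : E), 0 < a ->
          (fun p : R * R => T p.1 p.2 f) @ ((a, b) : R * R) --> T a b f) &
      (forall (a b : R) (f : E), 0 < a -> `|T a b f| <= `|f|)].

(* one-parameter subgroups: j = false gives T_1(t) = T(e^t,0),
   j = true gives T_2(t) = T(1,t) *)
Definition Tsub T (j : bool) (t : R) : E -> E :=
  if j then T 1 t else T (expR t) 0.

Definition diffq T j (f : E) : R -> E := fun t => t^-1 *: (Tsub T j t f - f).

Definition gen_dom T j (f : E) : Prop := cvg (diffq T j f @ 0^').

Definition gen T j (f : E) : E := lim (diffq T j f @ 0^').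

Fixpoint apply_seq T (js : seq bool) (f : E) : E :=
  if js is j :: js' then gen T j (apply_seq T js' f) else f.

Fixpoint seq_dom T (js : seq bool) (f : E) : Prop :=
  if js is j :: js' then seq_dom T js' f /\ gen_dom T j (apply_seq T js' f)
  else True.

Definition inEr T (r : nat) (f : E) : Prop :=
  forall js : seq bool, (size js <= r)%N -> seq_dom T js f.

Definition normEr T (r : nat) (f : E) : R :=
  `|f| + \sum_(k < r) \sum_(js : (k.+1).-tuple bool) `|apply_seq T js f|.

Definition Kfun T (r : nat) (t : R) (f : E) : R :=
  inf [set x : R | exists f0 f1 : E,
         [/\ f = f0 + f1, inEr T r f1 & x = `|f0| + t * normEr T r f1]].

End Rep.

From HB Require Import structures.
From mathcomp Require Import all_boot all_order all_algebra.
From mathcomp Require Import all_classical all_reals all_analysis.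
From mathcomp Require Import ring lra zify.
Import Order.TTheory GRing.Theory Num.Theory.
Import numFieldNormedType.Exports.
Set Implicit Arguments. Unset Strict Implicit.
Local Open Scope ring_scope.

(* For a contraction semigroup with generator A, discretising
   T(t)x - x = int_0^t T(s) A x ds gives |T(t)x - x - t Ax| <= t^2 |A^2 x|, hence
   the Landau inequality |Ax|^2 <= 8 |x| |A^2 x|.  Summing it over all words
   A_{j1} ... A_{jm+1} f shows N_{m+1}^2 <= C N_m N_{m+2} for N_k := |f|_{E^k}, so
   (N_k) is log-convex up to a constant and N_k^r <= C' N_0^(r-k) N_r^k; taking
   r-th roots gives (I).  (II) holds with constant 1 through f = 0 + f. *)

Lemma sqr_le_of_quadratic_bound (R : realFieldType) (a b c : R) :
  0 <= a -> 0 <= b -> 0 <= c -> (forall t, 0 < t -> t * a <= b + t ^+ 2 * c) ->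
  a ^+ 2 <= 4 * (b * c).
Proof.
rewrite le0r => /orP[/eqP->|a0] b0 c0; first by rewrite expr0n /= !mulr_ge0.
move: c0; rewrite le0r => /orP[/eqP->|c0] bound.
  have := bound ((b + 1) / a) (divr_gt0 (ltr_wpDl b0 ltr01) a0).
  by rewrite divfK ?lt0r_neq0 // mulr0 addr0; lra.
set t := a / (2 * c); have t0 : 0 < t by rewrite divr_gt0 ?mulr_gt0.
have ta : t * a = 2 * (t ^+ 2 * c) by rewrite /t; field; rewrite lt0r_neq0.
have a2 : a ^+ 2 = 4 * c * (t ^+ 2 * c) by rewrite /t; field; rewrite lt0r_neq0.
by have := bound t t0; rewrite ta a2; nra.
Qed.

Lemma sqrrD_le (R : realFieldType) (x y : R) : (x + y) ^+ 2 <= 2 * x ^+ 2 + 2 * y ^+ 2.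
Proof.
have := sqr_ge0 (x - y); rewrite sqrrB sqrrD !mulr2n.
by move: (x ^+ 2) (y ^+ 2) (x * y) => a b c; lra.
Qed.

Lemma sqr_sum_le (R : realFieldType) (I : finType) (F : I -> R) (B : R) :
  (forall i, F i ^+ 2 <= B) -> (\sum_i F i) ^+ 2 <= #|I|%:R ^+ 2 * B.
Proof.
move=> FB; rewrite expr2 big_distrlr /=.
have FF i l : F i * F l <= B.
  have := sqr_ge0 (F i - F l); rewrite sqrrB mulr2n; have := FB i; have := FB l.
  move: (F i ^+ 2) (F l ^+ 2) (F i * F l) => x y z; lra.
apply: le_trans (ler_sum _ (fun i _ => ler_sum _ (fun l _ => FF i l))) _.
by rewrite !sumr_const -mulrnA mulnn -natrX mulr_natl.
Qed.

Section LogConvexSequences.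
Variables (R : realFieldType) (r : nat).

Lemma logconvex_pow_le (b : nat -> R) : (forall k, (k <= r)%N -> 0 < b k) ->
  (forall k, (0 < k < r)%N -> b k ^+ 2 <= b k.-1 * b k.+1) ->
  forall k, (k <= r)%N -> b k ^+ r <= b 0 ^+ (r - k) * b r ^+ k.
Proof.
move=> b_gt0 bconv k; rewrite leq_eqVlt => /orP[/eqP->|kr].
  by rewrite subnn expr0 mul1r.
pose q i := b i.+1 / b i.
have q_ge0 i : (i < r)%N -> 0 <= q i.
  by move=> ir; rewrite ltW // divr_gt0 // b_gt0 // ltnW.
have q_mono : {in [pred i | (i < r)%N] &, {homo q : i j / (i <= j)%N >-> i <= j}}.
  apply: homo_leq_in => [x|y x z|i l _ /[!inE] lr m /andP[_ ml]|i _ /[!inE] ir].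
  - exact: lexx.
  - exact: le_trans.
  - by rewrite inE (ltn_trans ml lr).
  have bi := b_gt0 _ (ltnW (ltnW ir)); have bi1 := b_gt0 _ (ltnW ir).
  rewrite /q ler_pdivrMr // mulrAC ler_pdivlMr // -expr2.
  by rewrite mulrC; apply: bconv.
have b_prod m n : (m <= n <= r)%N -> b n = b m * \prod_(m <= i < n) q i.
  elim: n => [|n IH] /andP[mn nr].
    by move: mn; rewrite leqn0 => /eqP->; rewrite big_geq ?mulr1.
  move: mn; rewrite leq_eqVlt => /orP[/eqP->|mn]; first by rewrite big_geq ?mulr1.
  rewrite big_nat_recr //= mulrA -IH; last by rewrite -ltnS mn ltnW.
  by rewrite /q mulrC divfK // lt0r_neq0 // b_gt0 // ltnW.
set M := q k.
have M_ge0 : 0 <= M by exact: q_ge0.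
have P1_le : \prod_(0 <= i < k) q i <= M ^+ k.
  rewrite -[k in M ^+ k]subn0 -prodr_const_nat big_nat_cond [X in _ <= X]big_nat_cond.
  apply: ler_prod => i /andP[/andP[_ ik] _].
  have ir : (i < r)%N := ltn_trans ik kr.
  by rewrite q_ge0 //=; apply: q_mono; rewrite ?inE // ltnW.
have P2_ge : M ^+ (r - k) <= \prod_(k <= i < r) q i.
  rewrite -prodr_const_nat big_nat_cond [X in _ <= X]big_nat_cond.
  apply: ler_prod => i /andP[/andP[ki ir] _].
  by rewrite M_ge0 /=; apply: q_mono; rewrite ?inE.
have P1_ge0 : 0 <= \prod_(0 <= i < k) q i.
  rewrite big_nat_cond prodr_ge0 // => i /andP[/andP[_ ik] _].
  exact: q_ge0 (ltn_trans ik kr).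
have P1_pow : (\prod_(0 <= i < k) q i) ^+ (r - k) <= (\prod_(k <= i < r) q i) ^+ k.
  apply: le_trans (lerXn2r _ _ _ P1_le) _; rewrite ?nnegrE ?exprn_ge0 //.
  rewrite -!exprM mulnC exprM; apply: lerXn2r; rewrite // nnegrE ?exprn_ge0 //.
  exact: le_trans (exprn_ge0 _ M_ge0) P2_ge.
have b0 : 0 <= b 0 by rewrite ltW // b_gt0.
have -> : b k ^+ r = b k ^+ (r - k) * b k ^+ k by rewrite -exprD subnK // ltnW.
rewrite {1}(b_prod 0 k) ?(ltnW kr) // exprMn -mulrA.
rewrite [b r](b_prod k r) ?leqnn ?(ltnW kr) // exprMn [_ ^+ k * _]mulrC.
apply: ler_wpM2l; first exact: exprn_ge0.
by apply: ler_wpM2r => //; rewrite exprn_ge0 // ltW // b_gt0 // ltnW.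
Qed.

(* [C ^+ (k * k) * a k ^+ 2] is log-convex, the square's second difference
   absorbing the constant. *)
Lemma pow_le_of_sqr_le_mul (C : R) (a : nat -> R) :
  1 <= C -> (forall k, (k <= r)%N -> 0 < a k) ->
  (forall k, (0 < k < r)%N -> a k ^+ 2 <= C * (a k.-1 * a k.+1)) ->
  forall k, (k <= r)%N -> a k ^+ r <= C ^+ (r * r * r) * (a 0 ^+ (r - k) * a r ^+ k).
Proof.
move=> C1 a_gt0 aconv k kr; have C0 : 0 < C := lt_le_trans ltr01 C1.
have a_ge0 i : (i <= r)%N -> 0 <= a i by move=> ir; exact: ltW (a_gt0 i ir).
pose b i := C ^+ (i * i) * a i ^+ 2.
have b_gt0 i : (i <= r)%N -> 0 < b i.
  by move=> ir; rewrite mulr_gt0 ?exprn_gt0 ?a_gt0.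
have bconv i : (0 < i < r)%N -> b i ^+ 2 <= b i.-1 * b i.+1.
  case: i => // m /andP[_ mr]; rewrite /b /= mulrACA -exprD.
  rewrite (_ : (m * m + m.+2 * m.+2 = m.+1 * m.+1 * 2 + 2)%N); last by lia.
  rewrite exprD exprMn -exprM -mulrA; apply: ler_wpM2l; first exact: exprn_ge0 (ltW C0).
  rewrite -exprMn -exprMn.
  apply: lerXn2r; last exact: aconv.
    by rewrite nnegrE exprn_ge0 // a_ge0 // ltnW.
  by rewrite nnegrE !mulr_ge0 ?a_ge0 ?(ltW C0) // ltnW // ltnW.
have := logconvex_pow_le b_gt0 bconv kr.
rewrite /b !exprMn -!exprM mul0n expr0 mul1r => blc.
set P := a 0 ^+ (r - k) * a r ^+ k.
have P_ge0 : 0 <= P by rewrite mulr_ge0 // exprn_ge0 // a_ge0.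
have {}blc : C ^+ (k * k * r) * (a k ^+ r) ^+ 2 <= C ^+ (r * r * k) * P ^+ 2.
  by move: blc; rewrite /P !expr2; congr (_ <= _); ring.
have C_le : C ^+ (r * r * k) <= C ^+ (k * k * r) * (C ^+ (r * r * r)) ^+ 2.
  by rewrite -exprM -exprD; apply: ler_weXn2l => //; nia.
rewrite -(@ler_pXn2r _ 2) // ?nnegrE ?mulr_ge0 ?exprn_ge0 ?a_ge0 ?(ltW C0) //.
rewrite -(ler_pM2l (exprn_gt0 (k * k * r) C0)) exprMn [X in _ <= X]mulrA.
by apply: le_trans blc _; apply: ler_wpM2r; rewrite ?exprn_ge0.
Qed.

End LogConvexSequences.

Section ContractionSemigroup.
Variables (R : realType) (E : completeNormedModType R) (T : R -> R -> E -> E).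
Hypothesis HT : is_contr_rep T.
Variable j : bool.

Lemma Tsub_linear t (c : R) (f g : E) :
  Tsub T j t (c *: f + g) = c *: Tsub T j t f + Tsub T j t g.
Proof. by case: HT => lin _ _ _ _; rewrite /Tsub; case: j; apply: lin; rewrite ?expR_gt0. Qed.

Lemma Tsub_contract t (f : E) : `|Tsub T j t f| <= `|f|.
Proof. by case: HT => _ _ _ _ con; rewrite /Tsub; case: j; apply: con; rewrite ?expR_gt0. Qed.

Lemma Tsub0 (f : E) : Tsub T j 0 f = f.
Proof. by case: HT => _ T1 _ _ _; rewrite /Tsub; case: j; rewrite ?expR0 T1. Qed.

Lemma TsubD s t (f : E) : Tsub T j (s + t) f = Tsub T j s (Tsub T j t f).
Proof.
case: HT => _ _ TM _ _; rewrite /Tsub; case: j.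
  by have := TM 1 s 1 t ltr01 ltr01 f; rewrite !mul1r addrC.
by have := TM _ 0 _ 0 (expR_gt0 s) (expR_gt0 t) f; rewrite mulr0 addr0 -expRD.
Qed.

Lemma Tsub_vec0 t : Tsub T j t 0 = 0.
Proof.
have := Tsub_linear t 1 0 0; rewrite !scale1r addr0.
by move/(congr1 (fun x => x - Tsub T j t 0)); rewrite subrr addrK.
Qed.

Lemma TsubB t (f g : E) : Tsub T j t (f - g) = Tsub T j t f - Tsub T j t g.
Proof. by rewrite addrC -scaleN1r Tsub_linear scaleN1r addrC. Qed.

Lemma TsubZ t (c : R) (f : E) : Tsub T j t (c *: f) = c *: Tsub T j t f.
Proof. by have := Tsub_linear t c f 0; rewrite !addr0 Tsub_vec0 addr0. Qed.

Lemma gen_vec0 : gen T j 0 = 0.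
Proof.
rewrite /gen /diffq (_ : (fun t => _) = cst 0) ?lim_cst //.
by apply/funext => t; rewrite Tsub_vec0 subrr scaler0.
Qed.

Lemma Tsub_subr_diffq (x : E) h : h != 0 -> Tsub T j h x - x = h *: diffq T j x h.
Proof. by move=> h0; rewrite /diffq scalerA mulfV // scale1r. Qed.

Lemma Tsub_telescope (x : E) h n :
  Tsub T j (n%:R * h) x - x = \sum_(i < n) Tsub T j (i%:R * h) (Tsub T j h x - x).
Proof.
elim: n => [|n IH]; first by rewrite big_ord0 mul0r Tsub0 subrr.
rewrite big_ord_recr /= -IH TsubB -addn1 natrD mulrDl mul1r TsubD.
by rewrite addrC addrA subrK.
Qed.

Lemma gen_dom_mesh (x : E) t e : gen_dom T j x -> 0 < t -> 0 < e ->
  exists2 n : nat, (0 < n)%N & `|gen T j x - diffq T j x (t / n%:R)| < e.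
Proof.
move=> /cvg_ex [l xl] t0 e0; have -> : gen T j x = l by exact: cvg_lim.
move/cvgrPdist_lt : xl => /(_ e e0) /nbhs_ballP [d /= d0 near_l].
exists (Num.truncn (t / d)).+1 => //.
have h0 : 0 < t / (Num.truncn (t / d)).+1%:R by rewrite divr_gt0.
apply: near_l; last by rewrite gt_eqF.
rewrite /ball /= sub0r normrN gtr0_norm // ltr_pdivrMr // mulrC -ltr_pdivrMr //.
exact: truncnS_gt.
Qed.

Lemma norm_Tsub_subr_le (x : E) t : gen_dom T j x -> 0 <= t ->
  `|Tsub T j t x - x| <= t * `|gen T j x|.
Proof.
move=> Dx; rewrite le0r => /orP[/eqP->|t0]; first by rewrite Tsub0 subrr normr0 mul0r.
apply/ler_addgt0Pr => e e0.
have [n n0] := gen_dom_mesh Dx t0 (divr_gt0 e0 t0); set h := t / n%:R => Ah.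
have h0 : 0 < h by rewrite divr_gt0 ?ltr0n.
have tE : t = n%:R * h by rewrite mulrC divfK // pnatr_eq0 -lt0n.
rewrite {1}tE Tsub_telescope; apply: le_trans (ler_norm_sum _ _ _) _.
apply: le_trans (ler_sum _ (fun i _ => Tsub_contract _ _)) _.
rewrite sumr_const card_ord Tsub_subr_diffq ?gt_eqF // normrZ gtr0_norm //.
have -> : e = t * (e / t) by rewrite mulrC divfK ?lt0r_neq0.
rewrite -mulr_natl mulrA -tE -mulrDr; apply: ler_wpM2l; first exact: ltW.
have := ler_normD (diffq T j x h - gen T j x) (gen T j x).
by rewrite subrK distrC => /le_trans -> //; rewrite addrC lerD2l ltW.
Qed.

Lemma norm_Tsub_taylor_le (x : E) t : gen_dom T j x -> gen_dom T j (gen T j x) ->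
  0 <= t -> `|Tsub T j t x - x - t *: gen T j x| <= t ^+ 2 * `|gen T j (gen T j x)|.
Proof.
move=> Dx DAx; rewrite le0r => /orP[/eqP->|t0].
  by rewrite Tsub0 subrr scale0r subr0 normr0 expr0n mul0r.
apply/ler_addgt0Pr => e e0; set y := gen T j x.
have [n n0] := gen_dom_mesh Dx t0 (divr_gt0 e0 t0); set h := t / n%:R => Ah.
have h0 : 0 < h by rewrite divr_gt0 ?ltr0n.
have tE : t = n%:R * h by rewrite mulrC divfK // pnatr_eq0 -lt0n.
have -> : Tsub T j t x - x - t *: y = \sum_(i < n)
    (Tsub T j (i%:R * h) (h *: (diffq T j x h - y)) + h *: (Tsub T j (i%:R * h) y - y)).
  rewrite [in Tsub T j t x]tE Tsub_telescope Tsub_subr_diffq ?gt_eqF //.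
  have -> : t *: y = \sum_(i < n) h *: y.
    by rewrite sumr_const card_ord -scaler_nat scalerA -tE.
  rewrite -sumrB.
  by apply: eq_bigr => i _; rewrite scalerBr TsubB !TsubZ scalerBr addrA subrK.
apply: le_trans (ler_norm_sum _ _ _) _.
have term_le (i : 'I_n) : `|Tsub T j (i%:R * h) (h *: (diffq T j x h - y)) +
    h *: (Tsub T j (i%:R * h) y - y)| <= h * (e / t) + h * (t * `|gen T j y|).
  apply: le_trans (ler_normD _ _) _; apply: lerD.
    apply: le_trans (Tsub_contract _ _) _; rewrite normrZ gtr0_norm // distrC.
    by apply: ler_wpM2l; rewrite ltW.
  rewrite normrZ gtr0_norm //; apply: ler_wpM2l; first exact: ltW.
  apply: le_trans (norm_Tsub_subr_le DAx _) _; first exact: mulr_ge0 (ler0n _ _) (ltW h0).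
  rewrite -/y; apply: ler_wpM2r => //; rewrite tE; apply: ler_wpM2r; first exact: ltW.
  by rewrite ler_nat ltnW.
apply: le_trans (ler_sum _ (fun i _ => term_le i)) _.
rewrite sumr_const card_ord -mulr_natl -mulrDr mulrA -tE mulrDr mulrCA divff ?lt0r_neq0 //.
by rewrite mulr1 mulrA -expr2 addrC.
Qed.

Lemma gen_landau (x : E) : gen_dom T j x -> gen_dom T j (gen T j x) ->
  `|gen T j x| ^+ 2 <= 8 * (`|x| * `|gen T j (gen T j x)|).
Proof.
move=> Dx DAx; rewrite (_ : 8 * _ = 4 * (2 * `|x| * `|gen T j (gen T j x)|)); last by ring.
apply: sqr_le_of_quadratic_bound; rewrite ?mulr_ge0 // => t t0.
have := ler_normD (Tsub T j t x - x - t *: gen T j x) (- (Tsub T j t x - x)).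
rewrite addrC addKr normrN normrZ gtr0_norm // => /le_trans; apply.
rewrite addrC mulr2n mulrDl mul1r; apply: lerD; last exact: norm_Tsub_taylor_le (ltW t0).
by rewrite normrN; apply: le_trans (ler_normB _ _) _; rewrite lerD2r Tsub_contract.
Qed.

End ContractionSemigroup.

Section SobolevNorms.
Variables (R : realType) (E : completeNormedModType R) (T : R -> R -> E -> E).
Hypothesis HT : is_contr_rep T.

Lemma normEr0 (f : E) : normEr T 0 f = `|f|.
Proof. by rewrite /normEr big_ord0 addr0. Qed.

Lemma normErS k (f : E) :
  normEr T k.+1 f = normEr T k f + \sum_(js : k.+1.-tuple bool) `|apply_seq T js f|.
Proof. by rewrite /normEr big_ord_recr /= addrA. Qed.

Lemma normEr_ge0 k (f : E) : 0 <= normEr T k f.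
Proof. by rewrite addr_ge0 // !sumr_ge0 // => i _; rewrite sumr_ge0. Qed.

Lemma normEr_mono (f : E) k l : (k <= l)%N -> normEr T k f <= normEr T l f.
Proof.
move=> /subnK <-; elim: (l - k)%N => [|n IH] //=.
by rewrite addSn normErS; apply: le_trans IH _; rewrite lerDl sumr_ge0.
Qed.

Lemma norm_apply_seq_le (f : E) (js : seq bool) k :
  (size js <= k)%N -> `|apply_seq T js f| <= normEr T k f.
Proof.
move=> /(normEr_mono f); apply: le_trans; case: js => [|j js] /=; first by rewrite normEr0.
rewrite normErS ler_wpDl ?normEr_ge0 //.
have sz : size (j :: js) == (size js).+1 by [].
by rewrite (bigD1 (Tuple sz)) //= lerDl sumr_ge0.
Qed.

Lemma apply_seq_vec0 (js : seq bool) : apply_seq T js 0 = 0.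
Proof. by elim: js => //= j js ->; rewrite gen_vec0. Qed.

Lemma normEr_vec0 k : normEr T k 0 = 0.
Proof.
rewrite /normEr normr0 add0r big1 // => i _.
by rewrite big1 // => js _; rewrite apply_seq_vec0 normr0.
Qed.

Lemma normEr_sqr_le r (f : E) m : inEr T r f -> (m.+2 <= r)%N ->
  normEr T m.+1 f ^+ 2 <= (2 + 16 * 4 ^+ r) * (normEr T m f * normEr T m.+2 f).
Proof.
move=> Df mr; set am := normEr T m f; set am2 := normEr T m.+2 f.
have am_ge0 : 0 <= am := normEr_ge0 m f.
have am_le : am <= am2 by apply: normEr_mono; rewrite ltnW.
have term_sqr (js : m.+1.-tuple bool) : `|apply_seq T js f| ^+ 2 <= 8 * (am * am2).
  case: js => [[|j js] //= /eqP[sz]].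
  have /= := Df (j :: j :: js); rewrite sz => /(_ mr) [[_ Dy] DAy].
  apply: le_trans (gen_landau HT Dy DAy) _; apply: ler_wpM2l => //.
  apply: ler_pM => //; first by apply: norm_apply_seq_le; rewrite sz.
  by have /= := @norm_apply_seq_le f (j :: j :: js) m.+2; rewrite sz; apply.
set S := \sum_(js : m.+1.-tuple bool) `|apply_seq T js f|.
have S_le : S ^+ 2 <= 4 ^+ r * (8 * (am * am2)).
  apply: le_trans (sqr_sum_le term_sqr) _.
  apply: ler_wpM2r; first by rewrite !mulr_ge0 // (le_trans am_ge0).
  by rewrite card_tuple card_bool -!natrX ler_nat -expnM mulnC expnM leq_pexp2l // ltnW.
have am_sqr : am ^+ 2 <= am * am2 by rewrite expr2 ler_wpM2l.
have -> : (2 + 16 * 4 ^+ r) * (am * am2) = 2 * (am * am2) + 16 * (4 ^+ r * (am * am2)).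
  by ring.
rewrite mulrCA in S_le; rewrite normErS -/am -/S; apply: le_trans (sqrrD_le am S) _.
move: S_le am_sqr; move: (S ^+ 2) (am ^+ 2) (am * am2) (4 ^+ r * (am * am2)).
by move=> x y w v; lra.
Qed.

Lemma normEr_pow_le r k (f : E) : inEr T r f -> (0 < k <= r)%N ->
  normEr T k f ^+ r <=
    (2 + 16 * 4 ^+ r) ^+ (r * r * r) * (`|f| ^+ (r - k) * normEr T r f ^+ k).
Proof.
move=> Df /andP[k0 kr]; have C1 : 1 <= 2 + 16 * 4 ^+ r :> R.
  by rewrite -lerBlDl (le_trans _ (mulr_ge0 _ (exprn_ge0 _ _))).
have [->|f0] := eqVneq f 0.
  rewrite normEr_vec0 expr0n gtn_eqF ?(leq_trans k0) //.
  by rewrite mulr_ge0 ?exprn_ge0 ?mulr_ge0 ?exprn_ge0 ?normEr_ge0 // (le_trans ler01 C1).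
rewrite -normEr0; apply: (pow_le_of_sqr_le_mul (a := normEr T ^~ f)) => // [i _|[|m] //].
  by rewrite (lt_le_trans _ (normEr_mono f (leq0n i))) // normEr0 normr_gt0.
by move=> /andP[_ mr]; exact: normEr_sqr_le.
Qed.

Lemma Kfun_le_normEr r t (f : E) : inEr T r f -> 0 <= t -> Kfun T r t f <= t * normEr T r f.
Proof.
move=> Df t0; apply: ge_inf.
  by exists 0 => _ [f0 [f1 [_ _ ->]]]; rewrite addr_ge0 ?mulr_ge0 ?normEr_ge0.
by exists 0, f; rewrite add0r normr0 add0r.
Qed.

End SobolevNorms.

Lemma root_pow_le (R : realType) (r k : nat) (D x y z : R) :
  (k <= r)%N -> (0 < r)%N -> 0 <= D -> 0 <= x -> 0 <= y -> 0 <= z ->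
  x ^+ r <= D * (y ^+ (r - k) * z ^+ k) ->
  x <= powR D r%:R^-1 * powR y (1 - k%:R / r%:R) * powR z (k%:R / r%:R).
Proof.
move=> kr r0 D0 x0 y0 z0 le_pow.
have r_neq0 : r%:R != 0 :> R by rewrite pnatr_eq0 -lt0n.
have root_pow w n : 0 <= w -> powR (w ^+ n) r%:R^-1 = powR w (n%:R / r%:R).
  by move=> w0; rewrite -powR_mulrn // -powRrM.
rewrite -[x](powRr1 x0) -(divff r_neq0) -root_pow //.
apply: le_trans (ge0_ler_powR _ _ _ le_pow) _.
- by rewrite invr_ge0 ler0n.
- by rewrite nnegrE exprn_ge0.
- by rewrite nnegrE !mulr_ge0 ?exprn_ge0.
rewrite !powRM ?mulr_ge0 ?exprn_ge0 // mulrA !root_pow // natrB //.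
by rewrite mulrBl divff.
Qed.

Theorem mainTheorem10 (R : realType) (r : nat) :
  exists Cr : R, forall k : nat, (k <= r)%N -> exists Ckr : R,
    forall (E : completeNormedModType R) (T : R -> R -> E -> E),
      is_contr_rep T ->
      forall f : E, inEr T r f ->
      forall s : R, 0 < s ->
        normEr T k f <=
          Ckr * powR `|f| (1 - k%:R / r%:R) * powR (normEr T r f) (k%:R / r%:R)
        /\ Kfun T r (s ^+ r) f <= Cr * s ^+ r * normEr T r f.
Proof.
exists 1 => k kr; set C : R := 2 + 16 * 4 ^+ r.
exists (if k == 0%N then 1 else powR (C ^+ (r * r * r)) r%:R^-1).
move=> E T HT f Df s s0; split; last first.
  by rewrite mul1r; apply: Kfun_le_normEr; rewrite // exprn_ge0 // ltW.
have [->|k0] := eqVneq k 0%N.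
  by rewrite mul0r subr0 powRr1 // powRr0 mul1r mulr1 normEr0.
have k_gt0 : (0 < k)%N by rewrite lt0n.
apply: root_pow_le (normEr_pow_le HT Df _); rewrite ?k_gt0 ?normEr_ge0 //.
exact: leq_trans kr.
Qed.
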